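(* The values $z_{\sigma,j}$ can be chosen such that the points of $P_L^\mathrm{z}$ are affinely independent for each combinatorial line $L$ of $\mathrm{HJ}(d,n)$. Moreover, with this choice, $\conv(P_L^\mathrm{z})$ is a facet of $\conv(P^\mathrm{z})$.
   Context: Here $d>5$. Combinatorial lines and $\mathrm{HJ}(d,n)$: for $\tau\in([d]\cup\{*\})^n\setminus[d]^n$ and $k\in\mathbb{R}$, $\sigma(\tau,k)$ is $\tau$ with every $*$ replaced by $k$; $L_\tau=\{\sigma(\tau,k):k\in[d]\}$, and $\mathrm{HJ}(d,n)$ is the hypergraph on $[d]^n$ of all combinatorial lines. Vectors $v_1,\dots,v_n\in\mathbb{R}^2$ have positive $x$-components; $p_\sigma=\sum_i\sigma_iv_i$; $P=\{p_\sigma:\sigma\in[d]^n\}$ consists of distinct points; for a line $L$, $P_L=\{p_\sigma:\sigma\in L\}$ spans the line $y=a_Lx+b_L$, which meets $P$ exactly in $P_L$. $\nu(x,y)=(x^2,xy,y^2,x,y)$. $\phi_\epsilon(x,y)=(x,y+\sqrt{\epsilon x})$, $p^\epsilon_\sigma=\phi_\epsilon(p_\sigma)$, $P^\epsilon=\phi_\epsilon(P)$, $P^\epsilon_L=\phi_\epsilon(P_L)$; $g^\epsilon_L$ is the affine function on $\mathbb{R}^5$ with $g^\epsilon_L(x^2,xy,y^2,x,y)=(y-a_Lx-b_L)^2-\epsilon x$, and $\epsilon>0$ is small enough that for every line $L$, $g^\epsilon_L$ vanishes on $\nu(P^\epsilon_L)$ and is positive on $\nu(P^\epsilon\setminus P^\epsilon_L)$;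 moreover $\nu(P^\epsilon_L)$ spans the hyperplane $(g^\epsilon_L)^{-1}(0)$ in $\mathbb{R}^5$, any 5 of its points being affinely independent. For $\sigma\in[d]^n$ let $p^\mathrm{z}_\sigma=(\nu(p^\epsilon_\sigma),z_{\sigma,1},\dots,z_{\sigma,d-5})\in\mathbb{R}^d$, $P^\mathrm{z}=\{p^\mathrm{z}_\sigma:\sigma\in[d]^n\}$ and $P^\mathrm{z}_L=\{p^\mathrm{z}_\sigma:\sigma\in L\}$. *)

From HB Require Import structures.
From mathcomp Require Import all_boot all_order all_algebra.
From mathcomp Require Import reals.
Set Implicit Arguments. Unset Strict Implicit. Unset Printing Implicit Defensive.
Import Order.TTheory GRing.Theory Num.Theory.
Local Open Scope ring_scope.

(* Words sigma in [d]^n : the entry k : 'I_d stands for the number k+1 in [d]. *)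
Definition word (d n : nat) := {ffun 'I_n -> 'I_d}.
(* tau in ([d] u {*})^n : None stands for the symbol * . *)
Definition pattern (d n : nat) := {ffun 'I_n -> option 'I_d}.

Definition is_line d n (tau : pattern d n) : bool := [exists i, tau i == None].

Definition sigma_tau d n (tau : pattern d n) (k : 'I_d) : word d n :=
  [ffun i => if tau i is Some c then c else k].

Definition in_line d n (tau : pattern d n) (sigma : word d n) : Prop :=
  exists k : 'I_d, sigma = sigma_tau tau k.

Section Geom.
Variable R : realType.

Definition pt d n (vx vy : 'I_n -> R) (sigma : word d n) : R * R :=
  (\sum_(i < n) (sigma i).+1%:R * vx i, \sum_(i < n) (sigma i).+1%:R * vy i).

Definition nu (p : R * R) : 'rV[R]_5 :=
  \row_(i < 5) nth 0 [:: p.1 ^+ 2; p.1 * p.2; p.2 ^+ 2; p.1; p.2] i.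

Definition phi (eps : R) (p : R * R) : R * R := (p.1, p.2 + Num.sqrt (eps * p.1)).

(* g^eps_L : the affine function on R^5 with
   g(x^2,xy,y^2,x,y) = (y - a x - b)^2 - eps x, written out in coordinates *)
Definition gL (a b eps : R) (w : 'rV[R]_5) : R :=
  a ^+ 2 * w 0 0 - 2 * a * w 0 1 + w 0 2 + (2 * a * b - eps) * w 0 3
  - 2 * b * w 0 4 + b ^+ 2.

Definition aff_indep m (I : finType) (x : I -> 'rV[R]_m) : Prop :=
  forall l : I -> R, \sum_i l i = 0 -> \sum_i l i *: x i = 0 -> forall i, l i = 0.

Definition conv_mem m (I : finType) (x : I -> 'rV[R]_m) (p : 'rV[R]_m) : Prop :=
  exists l : I -> R, (forall i, 0 <= l i) /\ \sum_i l i = 1 /\ p = \sum_i l i *: x i.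

Definition dotv m (c p : 'rV[R]_m) : R := \sum_(i < m) c 0 i * p 0 i.

(* conv(F) is a facet of conv(S) (in R^m): it is the intersection of conv(S)
   with a supporting hyperplane {c.p = beta} (c <> 0), and it has affine
   dimension m-1 (it contains m affinely independent points). *)
Definition is_facet m (J I : finType) (F : J -> 'rV[R]_m) (S : I -> 'rV[R]_m) : Prop :=
  exists (c : 'rV[R]_m) (beta : R),
    [/\ c != 0,
        (forall i, dotv c (S i) <= beta),
        (forall p, (conv_mem S p /\ dotv c p = beta) <-> conv_mem F p) &
        exists y : 'I_m -> 'rV[R]_m, (forall j, conv_mem F (y j)) /\ aff_indep y].

(* p^z_sigma = (nu(p^eps_sigma), z_sigma) in R^(5 + (d-5)) = R^d (as d > 5) *)
Definition pz d n (vx vy : 'I_n -> R) (eps : R) (z : word d n -> 'rV[R]_(d - 5))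
  (sigma : word d n) : 'rV[R]_(5 + (d - 5)) :=
  row_mx (nu (phi eps (pt vx vy sigma))) (z sigma).

End Geom.

(* The extra coordinates z_{σ,j} (j = 1, ..., d-5) count the positions i with
   σ_i = j+5.  At σ(τ,k) this count is a constant plus (number of stars of τ)·[k = j+5],
   so in an affine dependence among the points of P^z_L the j-th extra coordinate
   isolates the coefficient of σ(τ,j+5), which must vanish; the remaining five points
   are affinely independent already in their ν-coordinates.  For the facet, extend the
   normal of the hyperplane (g^ε_L)^{-1}(0) by zeros: it supports ν(P^ε) and touches it
   exactly in ν(P^ε_L), so it cuts conv(P^z) exactly in conv(P^z_L), which contains the
   d affinely independent points of P^z_L. *)

From HB Require Import structures.
From mathcomp Require Import all_boot all_order all_algebra.
From mathcomp Require Import reals.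
From mathcomp Require Import ring.
Set Implicit Arguments. Unset Strict Implicit. Unset Printing Implicit Defensive.
Import Order.TTheory GRing.Theory Num.Theory.
Local Open Scope ring_scope.

Lemma widen_ord_inj m d (m_le_d : (m <= d)%N) : injective (widen_ord m_le_d).
Proof. by move=> i j /(congr1 val) ij; apply: val_inj. Qed.

Lemma sigma_tau_inj d n (tau : pattern d n) : is_line tau -> injective (sigma_tau tau).
Proof.
case/existsP=> i /eqP tau_i k k' /(congr1 (fun s : word d n => s i)).
by rewrite !ffunE tau_i.
Qed.

Section Geometry.
Variable R : realType.

Lemma sum_row_mx (I : finType) m n1 n2 (A : I -> 'M[R]_(m, n1)) (B : I -> 'M[R]_(m, n2)) :
  \sum_i row_mx (A i) (B i) = row_mx (\sum_i A i) (\sum_i B i).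
Proof.
elim/big_rec3: _ => [|i x y z _ ->]; by rewrite ?row_mx0 ?add_row_mx.
Qed.

Lemma dotv_row_mx m1 m2 (c1 w1 : 'rV[R]_m1) (c2 w2 : 'rV[R]_m2) :
  dotv (row_mx c1 c2) (row_mx w1 w2) = dotv c1 w1 + dotv c2 w2.
Proof.
rewrite /dotv big_split_ord /=.
by congr (_ + _); apply: eq_bigr => i _; rewrite (row_mxEl, row_mxEr) (row_mxEl, row_mxEr).
Qed.

Lemma dotv0l m (w : 'rV[R]_m) : dotv 0 w = 0.
Proof. by rewrite /dotv big1 // => i _; rewrite mxE mul0r. Qed.

Lemma dotv_sum m (I : finType) (c : 'rV[R]_m) (l : I -> R) (x : I -> 'rV[R]_m) :
  dotv c (\sum_i l i *: x i) = \sum_i l i * dotv c (x i).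
Proof.
rewrite /dotv; under eq_bigr do rewrite summxE mulr_sumr.
rewrite exchange_big; apply: eq_bigr => i _; rewrite mulr_sumr.
by apply: eq_bigr => j _; rewrite mxE mulrCA.
Qed.

Lemma conv_mem_point m (I : finType) (x : I -> 'rV[R]_m) i : conv_mem x (x i).
Proof.
exists (fun j => (j == i)%:R); split; first by move=> j; rewrite ler0n.
split.
  by rewrite (bigD1 i) //= eqxx big1 ?addr0 // => j /negbTE ->.
by rewrite (bigD1 i) //= eqxx scale1r big1 ?addr0 // => j /negbTE ->; rewrite scale0r.
Qed.

Section InjectiveReindexing.
Variables (I J : finType) (h : J -> I).
Hypothesis h_inj : injective h.

Lemma big_codom_inj (V : nmodType) (F : I -> V) :
  (forall i, i \notin codom h -> F i = 0) -> \sum_i F i = \sum_j F (h j).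
Proof.
move=> F0; rewrite (bigID (mem (codom h))) /= [X in _ + X]big1 ?addr0 //.
have uniq_h : uniq (codom h) by rewrite map_inj_uniq ?enum_uniq.
by rewrite -(big_uniq _ uniq_h) big_image.
Qed.

Definition extend0 (l : J -> R) (i : I) : R :=
  if [pick j | h j == i] is Some j then l j else 0.

Lemma extend0_codom l j : extend0 l (h j) = l j.
Proof.
by rewrite /extend0; case: pickP => [j' /eqP/h_inj -> // | /(_ j)]; rewrite eqxx.
Qed.

Lemma extend0_notin_codom l i : i \notin codom h -> extend0 l i = 0.
Proof. by rewrite /extend0; case: pickP => // j /eqP <-; rewrite codom_f. Qed.

Lemma sum_extend0 (V : lmodType R) l (x : I -> V) :
  \sum_i extend0 l i *: x i = \sum_j l j *: x (h j).
Proof.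
rewrite (big_codom_inj (F := fun i => extend0 l i *: x i)).
  by under eq_bigr do rewrite extend0_codom.
by move=> i /extend0_notin_codom ->; rewrite scale0r.
Qed.

Lemma sumr_extend0 l : \sum_i extend0 l i = \sum_j l j.
Proof.
rewrite (big_codom_inj (F := extend0 l)); last exact: extend0_notin_codom.
by under eq_bigr do rewrite extend0_codom.
Qed.

Lemma conv_mem_comp m (x : I -> 'rV[R]_m) p :
  conv_mem (fun j => x (h j)) p -> conv_mem x p.
Proof.
case=> l [l_ge0 [l1 ->]]; exists (extend0 l).
split; last by rewrite sumr_extend0 sum_extend0.
by move=> i; rewrite /extend0; case: pickP.
Qed.

Lemma aff_indep_comp m (x : I -> 'rV[R]_m) :
  aff_indep x -> aff_indep (fun j => x (h j)).
Proof.
move=> x_indep l l0 lx0 j; rewrite -(extend0_codom l j).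
by apply: x_indep; rewrite ?sumr_extend0 ?sum_extend0.
Qed.

Lemma aff_indep_row_mx m k (u : I -> 'rV[R]_m) (z : I -> 'rV[R]_k) :
  (forall l, \sum_i l i = 0 -> \sum_i l i *: z i = 0 ->
     forall i, i \notin codom h -> l i = 0) ->
  aff_indep (fun j => u (h j)) -> aff_indep (fun i => row_mx (u i) (z i)).
Proof.
move=> z_supp u_indep l l0; under eq_bigr do rewrite scale_row_mx.
rewrite sum_row_mx => /eqP; rewrite row_mx_eq0 => /andP[/eqP lu0 /eqP lz0].
have l_supp := z_supp l l0 lz0.
have lh0 j : l (h j) = 0.
  apply: (u_indep (fun j => l (h j))).
    by rewrite -(big_codom_inj (F := l)).
  by rewrite -(big_codom_inj (F := fun i => l i *: u i)) // => i /l_supp ->; rewrite scale0r.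
by move=> i; case: (boolP (i \in codom h)) => [/codomP[j ->]|/l_supp].
Qed.

Section SupportingHyperplane.
Variables (m : nat) (S : I -> 'rV[R]_m) (c : 'rV[R]_m) (beta : R).
Hypothesis on_hyperplane : forall j, dotv c (S (h j)) = beta.
Hypothesis below_hyperplane : forall i, i \notin codom h -> dotv c (S i) < beta.

Lemma dotv_le_supporting i : dotv c (S i) <= beta.
Proof.
case: (boolP (i \in codom h)) => [/codomP[j ->]|/below_hyperplane/ltW //].
by rewrite on_hyperplane.
Qed.

Lemma conv_mem_hyperplane p :
  conv_mem S p /\ dotv c p = beta <-> conv_mem (fun j => S (h j)) p.
Proof.
split=> [[[l [l_ge0 [l1 ->]]]] | p_conv]; last first.
  split; first exact: conv_mem_comp.
  case: p_conv => l [_ [l1 ->]]; rewrite dotv_sum.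
  by under eq_bigr do rewrite on_hyperplane; rewrite -mulr_suml l1 mul1r.
rewrite dotv_sum => l_on.
have gap0 : \sum_i l i * (beta - dotv c (S i)) = 0.
  by under eq_bigr do rewrite mulrBr; rewrite sumrB -mulr_suml l1 mul1r l_on subrr.
have gap_ge0 i : true -> 0 <= l i * (beta - dotv c (S i)).
  by move=> _; rewrite mulr_ge0 ?subr_ge0 ?dotv_le_supporting.
have l_supp i : i \notin codom h -> l i = 0.
  move=> /below_hyperplane; rewrite -subr_gt0 => /lt0r_neq0 gap_neq0.
  move/eqP: (psumr_eq0P gap_ge0 gap0 (i := i) isT).
  by rewrite mulf_eq0 (negbTE gap_neq0) orbF => /eqP.
exists (fun j => l (h j)); split=> //; split.
  by rewrite -(big_codom_inj (F := l)).
by rewrite -(big_codom_inj (F := fun i => l i *: S i)) // => i /l_supp ->; rewrite scale0r.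
Qed.

End SupportingHyperplane.
End InjectiveReindexing.

Lemma is_facet_supporting_hyperplane m k (I : finType) (h : 'I_k -> I)
    (S : I -> 'rV[R]_m) (c : 'rV[R]_m) (beta : R) :
  k = m -> injective h -> c != 0 ->
  (forall j, dotv c (S (h j)) = beta) ->
  (forall i, i \notin codom h -> dotv c (S i) < beta) ->
  aff_indep (fun j => S (h j)) -> is_facet (fun j => S (h j)) S.
Proof.
move=> km h_inj c_neq0 on_H below_H indep; exists c, beta; split=> //.
- exact: dotv_le_supporting.
- exact: conv_mem_hyperplane.
exists (fun j => S (h (cast_ord (esym km) j))); split=> [j|].
  exact: conv_mem_point.
exact: (aff_indep_comp (@cast_ord_inj _ _ (esym km)) indep).
Qed.

Definition occ d n (s : word d n) (v : nat) : R := \sum_(i < n) ((s i : nat) == v)%:R.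

Definition occ_row d n m (s : word d n) : 'rV[R]_(d - m) := \row_(j < d - m) occ s (j + m).

Lemma sum_occ_sigma_tau d n (tau : pattern d n) (l : 'I_d -> R) (v : 'I_d) :
  \sum_k l k = 0 ->
  \sum_k l k * occ (sigma_tau tau k) v = #|[pred i | tau i == None]|%:R * l v.
Proof.
move=> l0; rewrite /occ; under eq_bigr do rewrite mulr_sumr.
rewrite exchange_big (bigID (fun i => tau i == None)) /= [X in _ + X]big1 ?addr0.
  rewrite mulr_natl -sumr_const; apply: eq_bigr => i /eqP tau_i.
  under eq_bigr do rewrite ffunE tau_i.
  rewrite (bigD1 v) //= eqxx mulr1 big1 ?addr0 // => k /negbTE k_neq_v.
  by rewrite val_eqE k_neq_v mulr0.
move=> i; under eq_bigr do rewrite ffunE; case: (tau i) => // c _.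
by rewrite -mulr_suml l0 mul0r.
Qed.

Lemma aff_indep_line_occ_row p m d n (tau : pattern d n) (u : word d n -> 'rV[R]_p)
    (m_le_d : (m <= d)%N) :
  is_line tau ->
  aff_indep (fun i : 'I_m => u (sigma_tau tau (widen_ord m_le_d i))) ->
  aff_indep (fun k => row_mx (u (sigma_tau tau k)) (occ_row m (sigma_tau tau k))).
Proof.
move=> line u_indep.
apply: (aff_indep_row_mx (@widen_ord_inj _ _ m_le_d)) u_indep => l l0 lz0 k k_out.
have m_le_k : (m <= k)%N.
  rewrite leqNgt; apply: contra k_out => k_lt_m.
  by apply/codomP; exists (Ordinal k_lt_m); apply: val_inj.
have j_lt : (k - m < d - m)%N by rewrite ltn_sub2r // (leq_ltn_trans m_le_k).
move: (congr1 (fun M : 'rV_(d - m) => M 0 (Ordinal j_lt)) lz0).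
have occ_row_k (s : word d n) : occ_row m s 0 (Ordinal j_lt) = occ s k by rewrite mxE /= subnK.
rewrite /= summxE mxE; under eq_bigr do rewrite mxE occ_row_k.
rewrite (sum_occ_sigma_tau _ _ l0) => /eqP; rewrite mulf_eq0 => /orP[|/eqP //].
case/existsP: line => i0 tau_i0.
by rewrite pnatr_eq0 => /eqP/card0_eq/(_ i0); rewrite !inE tau_i0.
Qed.

Definition gL_normal (a b eps : R) : 'rV[R]_5 :=
  \row_(i < 5) nth 0 [:: - a ^+ 2; 2 * a; -1; eps - 2 * a * b; 2 * b] i.

Lemma dotv_gL_normal a b eps w : dotv (gL_normal a b eps) w = b ^+ 2 - gL a b eps w.
Proof.
rewrite /dotv /gL !big_ord_recl big_ord0 !mxE /=.
have -> : lift ord0 (lift ord0 (lift ord0 (lift ord0 ord0))) = 4 :> 'I_5 by apply/val_inj.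
have -> : lift ord0 (lift ord0 (lift ord0 ord0)) = 3 :> 'I_5 by apply/val_inj.
have -> : lift ord0 (lift ord0 ord0) = 2 :> 'I_5 by apply/val_inj.
have -> : lift ord0 ord0 = 1 :> 'I_5 by apply/val_inj.
have -> : ord0 = 0 :> 'I_5 by apply/val_inj.
ring.
Qed.

Lemma gL_normal_neq0 a b eps : gL_normal a b eps != 0.
Proof.
by apply/eqP => /matrixP/(_ 0 2); rewrite !mxE /= => /eqP; rewrite oppr_eq0 oner_eq0.
Qed.

End Geometry.

Theorem lemma2p8 (R : realType) (d n : nat) (vx vy : 'I_n -> R)
    (a b : pattern d n -> R) (eps : R) :
  (5 < d)%N ->
  (forall i, 0 < vx i) ->
  injective (@pt R d n vx vy) ->
  (forall tau, is_line tau -> forall sigma,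
      (pt vx vy sigma).2 = a tau * (pt vx vy sigma).1 + b tau <-> in_line tau sigma) ->
  0 < eps ->
  (forall tau, is_line tau -> forall sigma, in_line tau sigma ->
      gL (a tau) (b tau) eps (nu (phi eps (pt vx vy sigma))) = 0) ->
  (forall tau, is_line tau -> forall sigma, ~ in_line tau sigma ->
      0 < gL (a tau) (b tau) eps (nu (phi eps (pt vx vy sigma)))) ->
  (forall tau, is_line tau -> forall f : 'I_5 -> 'I_d, injective f ->
      aff_indep (fun i => nu (phi eps (pt vx vy (sigma_tau tau (f i)))))) ->
  exists z : word d n -> 'rV[R]_(d - 5),
    (forall tau, is_line tau ->
       aff_indep (fun k : 'I_d => pz vx vy eps z (sigma_tau tau k))) /\
    (forall tau, is_line tau ->
       is_facet (fun k : 'I_d => pz vx vy eps z (sigma_tau tau k))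
                (fun sigma : word d n => pz vx vy eps z sigma)).
Proof.
move=> d_gt5 _ _ _ _ gL_line gL_off nu_indep.
have d_ge5 : (5 <= d)%N := ltnW d_gt5.
have indep (tau : pattern d n) : is_line tau ->
    aff_indep (fun k => pz vx vy eps (occ_row R 5) (sigma_tau tau k)).
  move=> line; apply: (aff_indep_line_occ_row (m_le_d := d_ge5)
    (u := fun s => nu (phi eps (pt vx vy s))) line).
  exact: (nu_indep _ line _ (@widen_ord_inj _ _ d_ge5)).
exists (occ_row R 5); split=> // tau line.
pose c : 'rV_(5 + (d - 5)) := row_mx (gL_normal (a tau) (b tau) eps) 0.
have dotv_pz (s : word d n) : dotv c (pz vx vy eps (occ_row R 5) s)
    = b tau ^+ 2 - gL (a tau) (b tau) eps (nu (phi eps (pt vx vy s))).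
  by rewrite dotv_row_mx dotv0l addr0 dotv_gL_normal.
apply: (is_facet_supporting_hyperplane (c := c) (beta := b tau ^+ 2)) (indep _ line).
- by rewrite subnKC.
- exact: sigma_tau_inj.
- by rewrite row_mx_eq0 negb_and gL_normal_neq0.
- by move=> k; rewrite dotv_pz gL_line ?subr0 //; exists k.
- by move=> s /codomP s_off; rewrite dotv_pz gtrBl gL_off.
Qed.
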